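(* Let $K$ be an infinite field, $m\geq 1$, $n\geq 2$, and let $p(x_1,\ldots,x_m)\in K\langle x_1,\ldots,x_m\rangle$ be a noncommutative polynomial with zero constant term and $\mathrm{ord}(p)=r$, where $1<r<n-1$. Let $A'=(a'_{ij})\in T_n(K)^{(r-1)}$ be such that $a'_{s,r+s}\neq 0$ for all $s$ with $1\leq s$ and $r+s\leq n$. Then $A'\in p(T_n(K))$.
   Context: $T_n(K)$ denotes the algebra of $n\times n$ upper triangular matrices over $K$; $T_n(K)^{(t)}$ denotes the set of upper triangular matrices whose $(i,j)$ entries vanish whenever $j-i\leq t$. $p(T_n(K))=\{p(a_1,\ldots,a_m):a_i\in T_n(K)\}$. The order $\mathrm{ord}(p)$ is the least positive integer $r$ with $p(T_r(K))=\{0\}$ but $p(T_{r+1}(K))\neq\{0\}$ (with $T_1(K)=K$). *)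

From HB Require Import structures.
From mathcomp Require Import all_boot all_order all_algebra.
Set Implicit Arguments. Unset Strict Implicit. Unset Printing Implicit Defensive.
Import Order.TTheory GRing.Theory Num.Theory.
Local Open Scope ring_scope.

(* A noncommutative polynomial in K<x_0,...,x_{m-1}>, represented as a finite
   formal sum of monomials: each entry (c, w) is the term c * x_{w_1}...x_{w_k}.
   The empty word is the constant monomial 1. *)
Definition ncpoly (K : Type) (m : nat) := seq (K * seq 'I_m).

Definition nc_const (K : nzRingType) (m : nat) (p : ncpoly K m) : K :=
  \sum_(t <- p | nilp t.2) t.1.

Definition nc_eval (K : nzRingType) (m n : nat) (p : ncpoly K m)
  (a : 'I_m -> 'M[K]_n) : 'M[K]_n :=
  \sum_(t <- p) (t.1 *: \big[mulmx/1%:M]_(i <- t.2) a i).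

Definition upper_tri (K : nzRingType) (n : nat) (A : 'M[K]_n) : Prop :=
  forall i j : 'I_n, (j < i)%N -> A i j = 0.

Definition upper_tri_t (K : nzRingType) (n t : nat) (A : 'M[K]_n) : Prop :=
  upper_tri A /\ forall i j : 'I_n, (j <= i + t)%N -> A i j = 0.

Definition nc_image (K : nzRingType) (m n : nat) (p : ncpoly K m)
  (B : 'M[K]_n) : Prop :=
  exists a : 'I_m -> 'M[K]_n, (forall k, upper_tri (a k)) /\ nc_eval p a = B.

Definition nc_vanishes (K : nzRingType) (m : nat) (p : ncpoly K m) (n : nat) :
  Prop := forall a : 'I_m -> 'M[K]_n, (forall k, upper_tri (a k)) ->
          nc_eval p a = 0.

Definition nc_ord_cond (K : nzRingType) (m : nat) (p : ncpoly K m) (r : nat) :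
  Prop := nc_vanishes p r /\ not (nc_vanishes p r.+1).

Definition nc_ord_is (K : nzRingType) (m : nat) (p : ncpoly K m) (r : nat) :
  Prop := [/\ (0 < r)%N, nc_ord_cond p r &
          forall r' : nat, (0 < r')%N -> (r' < r)%N -> not (nc_ord_cond p r')].

Definition infinite_type (K : eqType) : Prop :=
  forall s : seq K, exists x : K, x \notin s.

From mathcomp Require Import all_boot all_order all_algebra.
From mathcomp Require Import zify.
From Stdlib Require Import Classical.
Set Implicit Arguments. Unset Strict Implicit. Unset Printing Implicit Defensive.
Import GRing.Theory.
Local Open Scope ring_scope.

(* 1. Evaluation of p commutes with every map that is additive, semilinear and
      multiplicative on the arguments (nc_eval_morph).  Applied to restriction
      to a principal block of upper triangular matrices, this shows that
      p(T_n) lies in T_n^{(r-1)} when p vanishes on T_r, and that a nonzero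
      value p(b), b in T_(r+1), has a nonzero corner entry (1, r + 1).
   2. Embedding b as the block at position N gives a value of p with a nonzero
      (N, N + r) entry.  Along a segment between two tuples every entry of the
      value of p is a polynomial; as K is infinite, a point of the segment
      keeps finitely many nonzero entries of both ends.  By induction on N we
      get B = p(a) in T_n^{(r-1)} with nonzero r-th superdiagonal.
   3. Such a matrix A satisfies A G = G J_r for an upper triangular G with
      nonzero diagonal built from columns of powers of A (J_r the r-th shift),
      so A' and B are conjugate by an upper triangular C with upper triangular
      inverse, and A' = C p(a) C^-1 = p(C a C^-1). *)

Section UpperTriangular.
Variables (R : nzRingType) (n : nat).
Implicit Types (x y : 'M[R]_n).

Lemma upper_tri1 : upper_tri (1%:M : 'M[R]_n).
Proof. by move=> i j lt_ji; rewrite mxE -val_eqE (gtn_eqF lt_ji). Qed.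

Lemma upper_triD x y : upper_tri x -> upper_tri y -> upper_tri (x + y).
Proof. by move=> ux uy i j lt_ji; rewrite mxE ux // uy // addr0. Qed.

Lemma upper_triZ c x : upper_tri x -> upper_tri (c *: x).
Proof. by move=> ux i j lt_ji; rewrite mxE ux // mulr0. Qed.

Lemma upper_triM x y : upper_tri x -> upper_tri y -> upper_tri (x *m y).
Proof.
move=> ux uy i j lt_ji; rewrite mxE big1 // => l _.
have [lt_li|le_il] := ltnP l i; first by rewrite ux ?mul0r.
by rewrite uy ?mulr0 // (leq_trans lt_ji).
Qed.

End UpperTriangular.

Definition nc_monomial (R : nzRingType) (m n : nat) (w : seq 'I_m)
  (a : 'I_m -> 'M[R]_n) : 'M[R]_n := \big[mulmx/1%:M]_(i <- w) a i.

Definition nc_map (R S : nzRingType) (m : nat) (g : R -> S) (p : ncpoly R m) :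
  ncpoly S m := [seq (g t.1, t.2) | t <- p].

Lemma nc_evalE (R : nzRingType) (m n : nat) (p : ncpoly R m) (a : 'I_m -> 'M[R]_n) :
  nc_eval p a = \sum_(t <- p) t.1 *: nc_monomial t.2 a.
Proof. by []. Qed.

Lemma nc_map_id (R : nzRingType) (m : nat) (p : ncpoly R m) : nc_map id p = p.
Proof. by rewrite /nc_map -[RHS]map_id; apply: eq_map => -[]. Qed.

Lemma nc_map_cancel (R S : nzRingType) (m : nat) (g : R -> S) (h : S -> R)
  (p : ncpoly R m) : cancel g h -> nc_map h (nc_map g p) = p.
Proof.
move=> gK; rewrite /nc_map -map_comp -[RHS]map_id.
by apply: eq_map => -[c w] /=; rewrite gK.
Qed.

Lemma upper_tri_eval (R : nzRingType) (m n : nat) (p : ncpoly R m)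
  (a : 'I_m -> 'M[R]_n) :
  (forall k, upper_tri (a k)) -> upper_tri (nc_eval p a).
Proof.
move=> ua; apply: (big_ind (@upper_tri R n)) => [i j _|x y|t _].
- by rewrite mxE.
- exact: upper_triD.
apply/upper_triZ/(big_ind (@upper_tri R n)) => //; first exact: upper_tri1.
exact: upper_triM.
Qed.

(* Evaluation of p commutes with any map f between matrix spaces that is
   additive, semilinear along a coefficient map g, and multiplicative on a
   multiplicatively closed set P containing the arguments.  This one fact
   covers block restriction, conjugation and specialisation of polynomial
   entries below. *)
Section EvalMorphism.
Variables (R S : nzRingType) (m n k : nat).
Variables (g : R -> S) (f : 'M[R]_n -> 'M[S]_k) (P : 'M[R]_n -> Prop).
Hypotheses (P1 : P 1%:M) (PM : forall x y, P x -> P y -> P (x *m y)).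
Hypotheses (f1 : f 1%:M = 1%:M) (fM : forall x y, P x -> P y -> f (x *m y) = f x *m f y).
Hypotheses (f0 : f 0 = 0) (fD : {morph f : x y / x + y}).
Hypothesis fZ : forall c x, f (c *: x) = g c *: f x.

Lemma nc_monomial_morph (w : seq 'I_m) (a : 'I_m -> 'M[R]_n) :
  (forall i, P (a i)) -> f (nc_monomial w a) = nc_monomial w (fun i => f (a i)).
Proof.
move=> Pa; pose Q x y := P x /\ f x = y.
suff [] : Q (nc_monomial w a) (nc_monomial w (fun i => f (a i))) by [].
apply: (big_ind2 Q) => [|x1 y1 x2 y2 [Px1 <-] [Px2 <-]|i _] //.
by split; [apply: PM | apply: fM].
Qed.

Lemma nc_eval_morph (p : ncpoly R m) (a : 'I_m -> 'M[R]_n) :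
  (forall i, P (a i)) -> f (nc_eval p a) = nc_eval (nc_map g p) (fun i => f (a i)).
Proof.
move=> Pa; rewrite !nc_evalE big_map (big_morph f fD f0).
by apply: eq_bigr => t _; rewrite fZ nc_monomial_morph.
Qed.

End EvalMorphism.

Lemma eq_nc_eval (R : nzRingType) (m n : nat) (p : ncpoly R m)
  (a b : 'I_m -> 'M[R]_n) : a =1 b -> nc_eval p a = nc_eval p b.
Proof. by move=> eq_ab; apply: eq_bigr => t _; rewrite (eq_bigr _ (fun i _ => eq_ab i)). Qed.

Section Blocks.
Variables (R : nzRingType) (n k N : nat).
Hypothesis hk : (N + k <= n)%N.

Definition block_ord (i : 'I_k) : 'I_n := widen_ord hk (rshift N i).

Definition block (A : 'M[R]_n) : 'M[R]_k :=
  \matrix_(i, j) A (block_ord i) (block_ord j).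

Lemma block_ordE i : nat_of_ord (block_ord i) = (N + i)%N.
Proof. by []. Qed.

Lemma block_ord_inj : injective block_ord.
Proof. by move=> i j /(congr1 val) /addnI /val_inj. Qed.

Lemma sum_window (F : 'I_n -> R) :
  (forall l : 'I_n, (l < N)%N || (N + k <= l)%N -> F l = 0) ->
  \sum_(l < n) F l = \sum_(l < k) F (block_ord l).
Proof.
move=> F_out; rewrite (bigID (mem [set block_ord l | l : 'I_k])) /=.
rewrite [X in _ + X]big1 ?addr0 => [|l l_out].
  by rewrite big_imset //= => i j _ _ /block_ord_inj.
apply: F_out; have [//|le_Nl] := ltnP l N; rewrite leqNgt.
apply: contra l_out => lt_l_Nk; apply/imsetP.
have lt_lN_k : (l - N < k)%N by lia.
by exists (Ordinal lt_lN_k) => //; apply: val_inj => /=; lia.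
Qed.

(* On upper triangular matrices, restriction to a principal block is
   multiplicative: the entries of x *m y inside the block only involve
   entries of x and y inside the block. *)
Lemma block_mul (x y : 'M[R]_n) : upper_tri x -> upper_tri y ->
  block (x *m y) = block x *m block y.
Proof.
move=> ux uy; apply/matrixP => i j; rewrite !mxE sum_window => [|l].
  by apply: eq_bigr => l _; rewrite !mxE.
case/orP => [lt_lN | le_Nk_l].
  by rewrite ux ?mul0r // block_ordE ltn_addr.
by rewrite uy ?mulr0 // block_ordE (leq_trans _ le_Nk_l) // ltn_add2l.
Qed.

Lemma block1 : block 1%:M = 1%:M.
Proof. by apply/matrixP => i j; rewrite !mxE (inj_eq block_ord_inj). Qed.

Lemma upper_tri_block (x : 'M[R]_n) : upper_tri x -> upper_tri (block x).
Proof. by move=> ux i j lt_ji; rewrite mxE ux // !block_ordE ltn_add2l. Qed.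

(* Restricting to a principal block commutes with evaluating p on upper
   triangular tuples: x |-> block x is an algebra morphism T_n -> T_k. *)
Lemma block_eval (m : nat) (p : ncpoly R m) (a : 'I_m -> 'M[R]_n) :
  (forall i, upper_tri (a i)) -> block (nc_eval p a) = nc_eval p (fun i => block (a i)).
Proof.
move=> ua; rewrite (@nc_eval_morph _ _ _ _ _ id _ (@upper_tri R n)) ?nc_map_id //.
- exact: upper_tri1.
- exact: upper_triM.
- exact: block1.
- exact: block_mul.
- by apply/matrixP => i j; rewrite !mxE.
- by move=> x y; apply/matrixP => i j; rewrite !mxE.
by move=> c x; apply/matrixP => i j; rewrite !mxE.
Qed.

End Blocks.

Section Embedding.
Variables (R : nzRingType) (n N k : nat).

Definition embed (x : 'M[R]_k.+1) : 'M[R]_n :=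
  \matrix_(i, j) if [&& (N <= i)%N, (i <= N + k)%N, (N <= j)%N & (j <= N + k)%N]
                 then x (inord (i - N)) (inord (j - N)) else 0.

Lemma upper_tri_embed (x : 'M[R]_k.+1) : upper_tri x -> upper_tri (embed x).
Proof.
move=> ux i j lt_ji; rewrite mxE.
case: ifP => // /and4P [le_Ni le_iNk le_Nj le_jNk].
by rewrite ux // !inordK; lia.
Qed.

Lemma block_embed (hk : (N + k.+1 <= n)%N) (x : 'M[R]_k.+1) :
  block hk (embed x) = x.
Proof.
apply/matrixP => i j; rewrite !mxE !block_ordE !leq_addr !leq_add2l !leq_ord.
by congr (x _ _); apply: val_inj; rewrite /= addKn inord_val.
Qed.

End Embedding.

(* Z_r(A): all entries of A strictly below the r-th superdiagonal vanish;
   for r >= 1 this is membership in T_n^{(r-1)}. *)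
Definition zero_below (R : nzRingType) (n r : nat) (A : 'M[R]_n) : Prop :=
  forall i j : 'I_n, (j < i + r)%N -> A i j = 0.

Definition superdiag_nonzero (R : nzRingType) (n r : nat) (A : 'M[R]_n) : Prop :=
  forall i j : 'I_n, nat_of_ord j = (i + r)%N -> A i j != 0.

Section VanishingPolynomial.
Variables (R : nzRingType) (m r : nat) (p : ncpoly R m).
Hypotheses (p_vanishes : nc_vanishes p r) (r_gt0 : (0 < r)%N).

(* If p vanishes on T_r then p(T_n) is contained in T_n^{(r-1)}: every entry
   (i, j) with j - i < r lies in an r x r principal block. *)
Lemma eval_zero_below (n : nat) (a : 'I_m -> 'M[R]_n) :
  (r <= n)%N -> (forall k, upper_tri (a k)) -> zero_below r (nc_eval p a).
Proof.
move=> le_rn ua i j lt_j_ir.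
have [lt_ji|le_ij] := ltnP j i; first exact: upper_tri_eval.
pose N := minn i (n - r).
have hk : (N + r <= n)%N by rewrite /N; lia.
have lt_iN_r : (i - N < r)%N by move: (ltn_ord i); rewrite /N; lia.
have lt_jN_r : (j - N < r)%N by move: (ltn_ord j); rewrite /N; lia.
have := congr1 (fun M : 'M[R]_r => M (Ordinal lt_iN_r) (Ordinal lt_jN_r)) (block_eval hk p ua).
rewrite p_vanishes => [|k]; last exact: upper_tri_block.
rewrite !mxE.
have -> : block_ord hk (Ordinal lt_iN_r) = i by apply: val_inj => /=; rewrite /N; lia.
by have -> : block_ord hk (Ordinal lt_jN_r) = j by apply: val_inj => /=; rewrite /N; lia.
Qed.

Lemma corner_nonzero (b : 'I_m -> 'M[R]_r.+1) :
  (forall k, upper_tri (b k)) -> nc_eval p b != 0 -> nc_eval p b ord0 ord_max != 0.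
Proof.
move=> ub; apply: contraNneq => corner0; apply/eqP/matrixP => i j; rewrite mxE.
have [lt_j_ir|le_ir_j] := ltnP j (i + r); first exact: eval_zero_below.
have -> : i = ord0 by apply: val_inj; move: (ltn_ord j) le_ir_j => /=; lia.
by have -> : j = ord_max by apply: val_inj; move: (ltn_ord j) le_ir_j => /=; lia.
Qed.

End VanishingPolynomial.

(* Along a line a + t d the entries of p(a + t d) are polynomial functions of
   t: they are the values at t of the entries of p evaluated over R[X]. *)
Lemma nc_eval_line (R : comNzRingType) (m n : nat) (p : ncpoly R m)
  (a d : 'I_m -> 'M[R]_n) :
  exists Q : 'M[{poly R}]_n,
    forall t, map_mx (horner_eval t) Q = nc_eval p (fun k => a k + t *: d k).
Proof.
pose X k := map_mx polyC (a k) + 'X *: map_mx polyC (d k).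
exists (nc_eval (nc_map polyC p) X) => t.
rewrite (@nc_eval_morph _ _ _ _ _ (horner_eval t) _ (fun=> True)) //; last first.
- exact: map_mxZ.
- exact: map_mxD.
- exact: map_mx0.
- by move=> x y _ _; apply: map_mxM.
- exact: map_mx1.
rewrite nc_map_cancel => [|c]; last exact: hornerC.
by apply: eq_nc_eval => k; apply/matrixP => i j; rewrite !mxE /horner_eval /=
  hornerD mulrC hornerMX !hornerC [t * _]mulrC.
Qed.

Section InfiniteField.
Variable K : fieldType.
Hypothesis K_infinite : infinite_type K.

Lemma exists_nonroot (q : {poly K}) : q != 0 -> exists t, q.[t] != 0.
Proof.
move=> q_neq0.
have [s [s_uniq s_size]] : exists s : seq K, uniq s /\ size s = size q.
  elim: (size q) => [|N [s [s_uniq s_size]]]; first by exists [::].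
  by have [x x_notin_s] := K_infinite s; exists (x :: s); rewrite /= x_notin_s s_uniq s_size.
have [all_roots|/allPn [t _ nonroot_t]] := boolP (all (root q) s); last by exists t.
suff q0 : q = 0 by rewrite q0 eqxx in q_neq0.
by apply: roots_geq_poly_eq0 all_roots s_uniq _; rewrite s_size.
Qed.

Lemma segment_point (m n : nat) (p : ncpoly K m) (a e : 'I_m -> 'M[K]_n)
  (S : pred ('I_n * 'I_n)) :
  (forall k, upper_tri (a k)) -> (forall k, upper_tri (e k)) ->
  (forall ij, S ij -> (nc_eval p a ij.1 ij.2 != 0) || (nc_eval p e ij.1 ij.2 != 0)) ->
  exists c : 'I_m -> 'M[K]_n,
    (forall k, upper_tri (c k)) /\ forall ij, S ij -> nc_eval p c ij.1 ij.2 != 0.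
Proof.
move=> ua ue S_nz; have [Q QE] := nc_eval_line p a (fun k => e k - a k).
have Q_at t i j : (Q i j).[t] = nc_eval p (fun k => a k + t *: (e k - a k)) i j.
  by rewrite -QE mxE.
have Q_at0 i j : (Q i j).[0] = nc_eval p a i j.
  by rewrite Q_at (eq_nc_eval p (b := a)) // => k; rewrite scale0r addr0.
have Q_at1 i j : (Q i j).[1] = nc_eval p e i j.
  by rewrite Q_at (eq_nc_eval p (b := e)) // => k; rewrite scale1r addrC subrK.
have prod_neq0 : \prod_(ij | S ij) Q ij.1 ij.2 != 0.
  apply/prodf_neq0 => ij /S_nz /orP [] nz; apply: contraNneq nz => Q0.
    by rewrite -Q_at0 Q0 horner0.
  by rewrite -Q_at1 Q0 horner0.
have [t] := exists_nonroot prod_neq0; rewrite horner_prod => /prodf_neq0 Qt_nz.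
exists (fun k => a k + t *: (e k - a k)); split => [k i j lt_ji|ij /Qt_nz].
  by rewrite !mxE ua // ue // subrr mulr0 addr0.
by rewrite Q_at.
Qed.

End InfiniteField.

Lemma eval_embed_corner (R : nzRingType) (m n r N : nat) (p : ncpoly R m)
  (b : 'I_m -> 'M[R]_r.+1) (hk : (N + r.+1 <= n)%N) (i j : 'I_n) :
  (forall k, upper_tri (b k)) -> nat_of_ord i = N -> nat_of_ord j = (i + r)%N ->
  nc_eval p (fun k => embed n N (b k)) i j = nc_eval p b ord0 ord_max.
Proof.
move=> ub eq_iN eq_j.
have -> : i = block_ord hk ord0 by apply: val_inj => /=; lia.
have -> : j = block_ord hk ord_max by apply: val_inj => /=; lia.
have ue k : upper_tri (embed n N (b k)) by apply: upper_tri_embed.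
have := congr1 (fun M : 'M[R]_r.+1 => M ord0 ord_max) (block_eval hk p ue).
rewrite (eq_nc_eval p (b := b)) => [|k]; last exact: block_embed.
by rewrite mxE.
Qed.

(* Moving the corner witness b along the diagonal: if p(b) has a nonzero
   corner for some b in T_(r+1), then some tuple in T_n gives a value of p whose
   whole r-th superdiagonal is nonzero. *)
Lemma superdiag_nonzero_eval (K : fieldType) (m n r : nat) (p : ncpoly K m)
  (b : 'I_m -> 'M[K]_r.+1) :
  infinite_type K -> (forall k, upper_tri (b k)) ->
  nc_eval p b ord0 ord_max != 0 -> (r < n)%N ->
  exists a : 'I_m -> 'M[K]_n,
    (forall k, upper_tri (a k)) /\ superdiag_nonzero r (nc_eval p a).
Proof.
move=> K_inf ub corner_nz lt_rn.
suff grow N : (N + r <= n)%N -> exists a : 'I_m -> 'M[K]_n,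
    (forall k, upper_tri (a k)) /\
    forall i j : 'I_n, nat_of_ord j = (i + r)%N -> (i < N)%N -> nc_eval p a i j != 0.
  have [|a [ua a_nz]] := grow (n - r)%N; first by lia.
  by exists a; split => // i j eq_j; apply: a_nz => //; move: (ltn_ord j); lia.
elim: N => [_|N IH le_Nr_n].
  by exists (fun=> 0); split => [k i j _|//]; rewrite mxE.
have [a [ua a_nz]] := IH (ltnW le_Nr_n).
have hk : (N + r.+1 <= n)%N by lia.
pose e k := embed n N (b k).
have ue k : upper_tri (e k) by apply: upper_tri_embed.
have e_nz (i j : 'I_n) : nat_of_ord i = N -> nat_of_ord j = (i + r)%N -> nc_eval p e i j != 0.
  by move=> eq_iN eq_j; rewrite (eval_embed_corner p hk ub eq_iN eq_j).
pose S : pred ('I_n * 'I_n) := fun ij => (nat_of_ord ij.2 == ij.1 + r)%N && (ij.1 < N.+1)%N.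
have [|c [uc c_nz]] := segment_point K_inf (p := p) (S := S) ua ue.
  move=> [i j] /= /andP [/eqP eq_j]; rewrite ltnS leq_eqVlt => /orP [/eqP eq_iN|lt_iN].
    by rewrite e_nz ?orbT.
  by rewrite a_nz.
exists c; split => // i j eq_j lt_iN.
by apply: (c_nz (i, j)); rewrite /S /= eq_j eqxx lt_iN.
Qed.

Lemma nc_eval_conj (R : comNzRingType) (m n : nat) (p : ncpoly R m)
  (a : 'I_m -> 'M[R]_n) (C D : 'M[R]_n) :
  D *m C = 1%:M -> C *m D = 1%:M ->
  nc_eval p (fun k => C *m a k *m D) = C *m nc_eval p a *m D.
Proof.
move=> DC CD; symmetry.
rewrite (@nc_eval_morph _ _ _ _ _ id (fun x => C *m x *m D) (fun=> True)) ?nc_map_id //.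
- by rewrite mulmx1.
- by move=> x y _ _; rewrite -!mulmxA (mulmxA D) DC mul1mx.
- by rewrite mulmx0 mul0mx.
- by move=> x y; rewrite mulmxDr mulmxDl.
by move=> c x; rewrite -scalemxAr -scalemxAl.
Qed.

Section Powers.
Variables (R : idomainType) (n r : nat) (A : 'M[R]_n.+1).
Hypothesis A_below : zero_below r A.

Lemma zero_below_pow q : zero_below (q * r) (A ^+ q).
Proof.
elim: q => [|q IH] i j.
  by rewrite mul0n addn0 expr0 => lt_ji; rewrite mxE -val_eqE (gtn_eqF lt_ji).
rewrite exprS -mulmxE mulSn => lt_j; rewrite mxE big1 // => l _.
have [lt_l_ir|le_ir_l] := ltnP l (i + r); first by rewrite A_below ?mul0r.
by rewrite IH ?mulr0 //; lia.
Qed.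

(* ... and its (qr)-th superdiagonal is the product of r-th superdiagonal
   entries of A, hence nonzero when those of A are. *)
Lemma superdiag_nonzero_pow q : superdiag_nonzero r A -> superdiag_nonzero (q * r) (A ^+ q).
Proof.
move=> A_nz; elim: q => [|q IH] i j eq_j.
  have -> : j = i by apply: val_inj; rewrite /= eq_j mul0n addn0.
  by rewrite expr0 mxE eqxx oner_eq0.
have lt_ir_n : (i + r < n.+1)%N by move: (ltn_ord j); rewrite eq_j mulSn; lia.
rewrite exprS -mulmxE mxE (bigD1 (Ordinal lt_ir_n)) //= big1 ?addr0 => [|l ne_l].
  by apply: mulf_neq0; [apply: A_nz | apply: IH; rewrite /= eq_j mulSn addnA].
have [lt_l_ir|le_ir_l] := ltnP l (i + r); first by rewrite A_below ?mul0r.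
have ne_l_ir : nat_of_ord l != (i + r)%N by apply: contra ne_l => /eqP eq_l; apply/eqP/val_inj.
by rewrite zero_below_pow ?mulr0 //; move: ne_l_ir; rewrite eq_j mulSn; lia.
Qed.

End Powers.

Definition shift_mx (R : nzRingType) (n r : nat) : 'M[R]_n :=
  \matrix_(i, j) (nat_of_ord j == i + r)%N%:R.
Arguments shift_mx {R} n r.

Section ChainBasis.
Variables (R : idomainType) (n r : nat) (A : 'M[R]_n.+1).
Hypothesis A_below : zero_below r A.

(* Index j splits the indices into chains j, j + r, j + 2r, ...; chain_len j
   is the number of steps from j to the last index of its chain. *)
Definition chain_len (j : nat) : nat := ((n - j) %/ r)%N.

Lemma chain_len_le (j : 'I_n.+1) : (j + chain_len j * r <= n)%N.
Proof. by have := leq_divM (n - j) r; rewrite /chain_len; move: (ltn_ord j); lia. Qed.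

(* The matrix G whose j-th column is column j + q r of A^q, q = chain_len j,
   i.e. A^q applied to the basis vector at the end of the chain of j.  It
   intertwines A and J_r. *)
Definition chain_mx : 'M[R]_n.+1 :=
  \matrix_(i, j) (A ^+ chain_len j) i (inord (j + chain_len j * r)).

(* By the bounds on powers of A, G is upper triangular, with nonzero diagonal
   when the r-th superdiagonal of A is nonzero. *)
Lemma upper_tri_chain_mx : upper_tri chain_mx.
Proof.
move=> i j lt_ji; rewrite mxE (zero_below_pow A_below) // inordK ?ltnS ?chain_len_le //.
by rewrite ltn_add2r.
Qed.

Lemma chain_mx_diag : superdiag_nonzero r A -> forall i, chain_mx i i != 0.
Proof.
move=> A_nz i; rewrite mxE (superdiag_nonzero_pow A_below A_nz) //.
by rewrite inordK // ltnS chain_len_le.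
Qed.

Hypothesis r_gt0 : (0 < r)%N.

Lemma chain_len_shift (j : nat) : (r <= j <= n)%N -> chain_len (j - r) = (chain_len j).+1.
Proof.
move=> /andP [le_rj le_jn]; rewrite /chain_len.
have -> : (n - (j - r) = (n - j) + r)%N by lia.
by rewrite divnDr ?dvdnn // divnn r_gt0 addn1.
Qed.

(* A G = G J_r: A maps column j of G to column j - r of G (the same chain,
   one step longer) and maps the columns j < r to 0, as A^(q+1) vanishes
   there. *)
Lemma chain_mx_shift : A *m chain_mx = chain_mx *m shift_mx n.+1 r.
Proof.
apply/matrixP => i j; have := chain_len_le j; set q := chain_len j => le_jq_n.
have -> : (A *m chain_mx) i j = (A ^+ q.+1) i (inord (j + q * r)).
  by rewrite exprS -mulmxE !mxE; apply: eq_bigr => l _; rewrite mxE.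
rewrite mxE; have [lt_jr|le_rj] := ltnP j r.
  rewrite big1 => [|l _]; last first.
    rewrite [shift_mx _ _ _ _]mxE; case: eqP => [eq_j|_]; last by rewrite mulr0.
    by move: lt_jr; rewrite eq_j ltnNge leq_addl.
  by rewrite (zero_below_pow A_below) // inordK // mulSn; lia.
have lt_jr_n : (j - r < n.+1)%N by move: (ltn_ord j); lia.
rewrite (bigD1 (Ordinal lt_jr_n)) //= big1 ?addr0 => [|l ne_l]; last first.
  rewrite [shift_mx _ _ _ _]mxE; case: eqP => [eq_j|_]; last by rewrite mulr0.
  by case/eqP: ne_l; apply: val_inj => /=; lia.
rewrite !mxE /= subnK // eqxx mulr1 chain_len_shift ?le_rj ?leq_ord //.
by have -> : (j - r + q.+1 * r = j + q * r)%N by rewrite mulSn; lia.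
Qed.

End ChainBasis.

Section TriangularUnits.
Variables (K : fieldType) (n : nat) (G : 'M[K]_n).
Hypotheses (G_upper : upper_tri G) (G_diag : forall i, G i i != 0).

Lemma upper_tri_unitmx : G \in unitmx.
Proof.
rewrite unitmxE -det_tr det_trig; last by apply/is_trig_mxP => i j lt_ij; rewrite mxE G_upper.
by rewrite unitfE; apply/prodf_neq0 => i _; rewrite mxE.
Qed.

(* ... and its inverse is upper triangular: for j < i, entry (i, j) of
   G G^-1 = 1 reduces to G i i * (G^-1) i j = 0, the other terms vanishing by
   triangularity of G and by induction on n - i. *)
Lemma upper_tri_invmx : upper_tri (invmx G).
Proof.
suff below_invmx d (i j : 'I_n) : (j < i)%N -> (n <= i + d)%N -> invmx G i j = 0.
  by move=> i j lt_ji; apply: (below_invmx n) => //; rewrite leq_addl.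
elim: d i j => [|d IH] i j lt_ji le_n_id; first by move: (ltn_ord i) le_n_id; lia.
have := congr1 (fun M : 'M[K]_n => M i j) (mulmxV upper_tri_unitmx).
rewrite !mxE (bigD1 i) //= big1 ?addr0 => [|l ne_li]; last first.
  have [lt_li|le_il] := ltnP l i; first by rewrite G_upper ?mul0r.
  by rewrite IH ?mulr0 //; move: ne_li le_n_id le_il; rewrite -val_eqE /=; lia.
rewrite -val_eqE /= (gtn_eqF lt_ji) => /eqP.
by rewrite mulf_eq0 (negbTE (G_diag i)) => /eqP.
Qed.

End TriangularUnits.

Lemma conj_shift_mx (K : fieldType) (n r : nat) (A : 'M[K]_n.+1) :
  (0 < r)%N -> zero_below r A -> superdiag_nonzero r A ->
  exists G : 'M[K]_n.+1, [/\ upper_tri G, upper_tri (invmx G), G \in unitmx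
                         & A = G *m shift_mx n.+1 r *m invmx G].
Proof.
move=> r_gt0 A_below A_nz; pose G := chain_mx r A.
have G_upper : upper_tri G := upper_tri_chain_mx A_below.
have G_diag : forall i, G i i != 0 := chain_mx_diag A_below A_nz.
have G_unit := upper_tri_unitmx G_upper G_diag.
exists G; split => //; first exact: upper_tri_invmx.
by rewrite -chain_mx_shift // -mulmxA mulmxV // mulmx1.
Qed.

Lemma conj_upper_tri (K : fieldType) (n r : nat) (A B : 'M[K]_n.+1) :
  (0 < r)%N -> zero_below r A -> superdiag_nonzero r A ->
  zero_below r B -> superdiag_nonzero r B ->
  exists C D : 'M[K]_n.+1, [/\ upper_tri C, upper_tri D, D *m C = 1%:M,
                              C *m D = 1%:M & A = C *m B *m D].
Proof.
move=> r_gt0 A_below A_nz B_below B_nz.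
have [G [uG uGi G_unit ->]] := conj_shift_mx r_gt0 A_below A_nz.
have [H [uH uHi H_unit ->]] := conj_shift_mx r_gt0 B_below B_nz.
exists (G *m invmx H), (H *m invmx G); split; try exact: upper_triM.
- by rewrite mulmxA -(mulmxA H) mulVmx // mulmx1 mulmxV.
- by rewrite mulmxA -(mulmxA G) mulVmx // mulmx1 mulmxV.
by rewrite !mulmxA -!(mulmxA _ (invmx H)) mulVmx // !mulmx1.
Qed.

Lemma nonvanishing_witness (R : nzRingType) (m n : nat) (p : ncpoly R m) :
  ~ nc_vanishes p n ->
  exists a : 'I_m -> 'M[R]_n, (forall k, upper_tri (a k)) /\ nc_eval p a != 0.
Proof.
move=> p_nonvanishing; apply: NNPP => no_witness; apply: p_nonvanishing => a ua.
have [//|pa_nz] := eqVneq (nc_eval p a) 0.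
by case: no_witness; exists a.
Qed.

Unset Implicit Arguments.
Set Strict Implicit.

Theorem lemma3p2 (K : fieldType) (m n r : nat) (p : ncpoly K m)
  (A' : 'M[K]_n) :
  infinite_type K -> (1 <= m)%N -> (2 <= n)%N ->
  nc_const p = 0 -> nc_ord_is p r -> (1 < r)%N -> (r < n - 1)%N ->
  upper_tri_t (r - 1) A' ->
  (forall i j : 'I_n, nat_of_ord j = (i + r)%N -> A' i j != 0) ->
  nc_image p A'.
Proof.
move=> K_inf _ _ _ [r_gt0 [p_van p_nonvan] _] _.
case: n A' => [|n] A' // lt_r_n [_ A'_below] A'_nz.
have lt_r_n1 : (r < n.+1)%N by lia.
have [b [ub pb_nz]] := nonvanishing_witness p_nonvan.
have corner := corner_nonzero p_van r_gt0 ub pb_nz.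
have [a [ua B_nz]] := superdiag_nonzero_eval K_inf ub corner lt_r_n1.
have B_below : zero_below r (nc_eval p a) := eval_zero_below p_van r_gt0 (ltnW lt_r_n1) ua.
have A_below : zero_below r A' by move=> i j lt_j_ir; apply: A'_below; lia.
have [C [D [uC uD DC CD ->]]] := conj_upper_tri r_gt0 A_below A'_nz B_below B_nz.
exists (fun k => C *m a k *m D); split; last exact: nc_eval_conj.
by move=> k; apply/upper_triM/uD/upper_triM.
Qed.
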